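(* Let $R$ be a Krull domain. (1) If the divisor class group $\operatorname{Cl}(R)$ is torsion, then $R$ is globally perinormal. (2) If $\dim R = 1$ and $R$ is globally perinormal, then $\operatorname{Cl}(R)$ is torsion.
   Context: All rings are commutative with identity; an overring of a domain $R$ is a ring between $R$ and its fraction field. A ring extension $A \subseteq B$ satisfies going-down if whenever $\mathfrak{p} \subset \mathfrak{q}$ are primes of $A$ and $Q$ is a prime of $B$ with $Q \cap A = \mathfrak{q}$, there is a prime $P \subseteq Q$ of $B$ with $P \cap A = \mathfrak{p}$. A domain $R$ is globally perinormal if every overring $S$ of $R$ such that $R \subseteq S$ satisfies going-down is a localization $R_W$ of $R$ at some multiplicative set $W$. A Krull domain is a domain $R$ with $R = \bigcap R_{\mathfrak{p}}$ over height one primes $\mathfrak{p}$, each nonzero element lying in only finitely many height one primes, and each $R_{\mathfrak{p}}$ ($\mathfrak{p}$ height one) a DVR; $\operatorname{Cl}(R)$ is its divisor class group. *)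

(* All rings are realized inside a fixed field K:
   a domain R is a predicate on K closed under the ring operations, whose
   fraction field is K; overrings of R are subrings S of K containing R;
   primes of a subring are predicates on K. *)
From mathcomp Require Import all_boot all_order all_algebra.
From Stdlib Require List.
Set Implicit Arguments. Unset Strict Implicit. Unset Printing Implicit Defensive.
Import Order.TTheory GRing.Theory Num.Theory.
Local Open Scope ring_scope.

Section Defs.
Variable K : fieldType.

Definition subset_pred (A B : K -> Prop) := forall x, A x -> B x.
Definition eq_pred (A B : K -> Prop) := forall x, A x <-> B x.

Definition is_subring (S : K -> Prop) :=
  [/\ S 1, (forall x y, S x -> S y -> S (x - y)) &
      (forall x y, S x -> S y -> S (x * y))].

Definition is_fraction_field_of (R : K -> Prop) :=
  forall x : K, exists a b, [/\ R a, R b, b != 0 & x = a / b].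

Definition is_prime (S P : K -> Prop) :=
  [/\ subset_pred P S, P 0,
      (forall x y, P x -> P y -> P (x + y)),
      (forall r x, S r -> P x -> P (r * x)) &
      (~ P 1 /\ (forall x y, S x -> S y -> P (x * y) -> P x \/ P y))].

Definition contraction (R Q : K -> Prop) : K -> Prop := fun x => Q x /\ R x.

Definition is_mult_set (R W : K -> Prop) :=
  [/\ subset_pred W R, W 1, (forall x y, W x -> W y -> W (x * y)) & ~ W 0].

Definition localization (R W : K -> Prop) : K -> Prop :=
  fun x => exists a w, [/\ R a, W w & x = a / w].

Definition loc_at (R P : K -> Prop) : K -> Prop :=
  localization R (fun w => R w /\ ~ P w).

Definition going_down (R S : K -> Prop) :=
  forall p q Q : K -> Prop, is_prime R p -> is_prime R q -> subset_pred p q ->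
    is_prime S Q -> eq_pred (contraction R Q) q ->
    exists P, [/\ is_prime S P, subset_pred P Q & eq_pred (contraction R P) p].

Definition globally_perinormal (R : K -> Prop) :=
  forall S : K -> Prop, is_subring S -> subset_pred R S -> going_down R S ->
    exists W, is_mult_set R W /\ eq_pred S (localization R W).

Definition strict_sub (A B : K -> Prop) := subset_pred A B /\ exists x, B x /\ ~ A x.

Definition zero_pred : K -> Prop := fun x => x = 0.

Definition height_one (R P : K -> Prop) :=
  [/\ is_prime R P, strict_sub zero_pred P &
      ~ exists Q, [/\ is_prime R Q, strict_sub zero_pred Q & strict_sub Q P]].

Definition krull_dim_one (R : K -> Prop) :=
  (exists P0 P1, [/\ is_prime R P0, is_prime R P1 & strict_sub P0 P1]) /\
  ~ (exists P0 P1 P2, [/\ is_prime R P0, is_prime R P1, is_prime R P2,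
                          strict_sub P0 P1 & strict_sub P1 P2]).

Definition discrete_valuation (v : K -> int) :=
  [/\ (forall x y, x != 0 -> y != 0 -> v (x * y) = v x + v y),
      (forall x y, x != 0 -> y != 0 -> x + y != 0 ->
                   Num.min (v x) (v y) <= v (x + y)) &
      (forall n : int, exists x, x != 0 /\ v x = n)].

Definition valuation_ring (v : K -> int) : K -> Prop :=
  fun x => x = 0 \/ 0 <= v x.

Definition is_DVR (V : K -> Prop) :=
  exists v, discrete_valuation v /\ eq_pred V (valuation_ring v).

Definition krull_domain (R : K -> Prop) :=
  [/\ (forall x, R x <-> (forall P, height_one R P -> loc_at R P x)),
      (forall x, R x -> x != 0 ->
         exists s : list (K -> Prop),
           forall P, height_one R P -> P x -> List.In P s) &
      (forall P, height_one R P -> is_DVR (loc_at R P))].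

Definition is_divisor (R : K -> Prop) (D : (K -> Prop) -> int) :=
  (forall P, ~ height_one R P -> D P = 0) /\
  exists s : list (K -> Prop), forall P, D P != 0 -> List.In P s.

(* D is principal: D = div(x) for some x in K^*, where the P-coefficient of
   div(x) is v_P(x), v_P the (unique) discrete valuation of the DVR R_P *)
Definition is_principal_divisor (R : K -> Prop) (D : (K -> Prop) -> int) :=
  exists x : K, x != 0 /\
    forall P, height_one R P -> forall v, discrete_valuation v ->
      eq_pred (loc_at R P) (valuation_ring v) -> v x = D P.

Definition class_group_torsion (R : K -> Prop) :=
  forall D, is_divisor R D ->
    exists n : nat, (0 < n)%N /\ is_principal_divisor R (fun P => D P *+ n).

End Defs.

From mathcomp Require Import all_boot all_order all_algebra.
From mathcomp Require Import ring zify.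
From mathcomp Require Import boolp classical_sets.
Set Implicit Arguments. Unset Strict Implicit. Unset Printing Implicit Defensive.
Import Order.TTheory GRing.Theory Num.Theory.
Local Open Scope ring_scope.

(* If Cl(R) is torsion, every height-one prime [Q] has a multiple [n Q] that is
   the divisor of some [t] in [R].  Let [S] be an overring with going-down.  If [t]
   is not a unit of [S] it lies in a prime of [S] whose contraction contains [Q];
   going-down then gives a prime of [S] lying over [Q], and this forces [S ⊆ R_Q].
   If [t] is a unit of [S], a power of [t] clears [Q] from the denominator of any
   [x] of [S].  Clearing the finitely many height-one primes of a denominator,
   [S = R_W] where [W] is the set of elements of [R] that become units in [S].

   Conversely, in dimension one going-down holds for every overring, so the
   intersection of the [R_Q], [Q <> P], is some [R_W].  It is larger than [R] by
   approximation, so some [w] of [W] lies in [P] while being a unit at every other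
   height-one prime: the divisor of [w] is a positive multiple of [P].  Since the
   prime divisors generate Cl(R), it is torsion. *)

Section KrullOverrings.
Variable K : fieldType.
Implicit Types (R S P Q W : K -> Prop) (x y z a b c t u w : K).

Lemma subring1 S : is_subring S -> S 1.
Proof. by case. Qed.

Lemma subringB S x y : is_subring S -> S x -> S y -> S (x - y).
Proof. by case=> _ hB _; apply: hB. Qed.

Lemma subringM S x y : is_subring S -> S x -> S y -> S (x * y).
Proof. by case=> _ _ hM; apply: hM. Qed.

Lemma subring0 S : is_subring S -> S 0.
Proof. by move=> hS; rewrite -(subrr 1); apply: subringB (subring1 hS) (subring1 hS). Qed.

Lemma subringD S x y : is_subring S -> S x -> S y -> S (x + y).
Proof.
move=> hS hx hy; rewrite -[y]opprK -[- y]sub0r.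
by apply: subringB => //; apply: subringB => //; apply: subring0.
Qed.

Lemma subringX S x n : is_subring S -> S x -> S (x ^+ n).
Proof.
move=> hS hx; elim: n => [|n IH]; first by rewrite expr0; apply: subring1.
by rewrite exprS; apply: subringM.
Qed.

Lemma prime_mem S P x : is_prime S P -> P x -> S x.
Proof. by case=> h _ _ _ _; apply: h. Qed.

Lemma prime0 S P : is_prime S P -> P 0.
Proof. by case. Qed.

Lemma prime_not1 S P : is_prime S P -> ~ P 1.
Proof. by case=> _ _ _ _ []. Qed.

Lemma primeD S P x y : is_prime S P -> P x -> P y -> P (x + y).
Proof. by case=> _ _ hD _ _; apply: hD. Qed.

Lemma primeMl S P r x : is_prime S P -> S r -> P x -> P (r * x).
Proof. by case=> _ _ _ h _; apply: h. Qed.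

Lemma prime_mulP S P x y : is_prime S P -> S x -> S y -> P (x * y) -> P x \/ P y.
Proof. by case=> _ _ _ _ [_ h]; apply: h. Qed.

Lemma prime_expP S P x n : is_subring S -> is_prime S P -> S x -> P (x ^+ n) -> P x.
Proof.
move=> hS hP hx; elim: n => [|n IH]; first by rewrite expr0 => /(prime_not1 hP).
by rewrite exprS => /(prime_mulP hP hx (subringX n hS hx)) [] // /IH.
Qed.

Lemma prime_neq0 S P x : is_prime S P -> ~ P x -> x != 0.
Proof. by move=> hP hx; apply/eqP => x0; apply: hx; rewrite x0; apply: prime0 hP. Qed.

Lemma zero_pred_prime S : is_subring S -> is_prime S (@zero_pred K).
Proof.
move=> hS; split => //.
- by move=> x ->; apply: subring0.
- by move=> x y -> ->; rewrite addr0.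
- by move=> r x _ ->; rewrite mulr0.
split; first by move/eqP; rewrite oner_eq0.
by move=> x y _ _ /eqP; rewrite mulf_eq0 => /orP[] /eqP; [left|right].
Qed.

Lemma contraction_prime R S M : is_subring R -> subset_pred R S -> is_prime S M ->
  is_prime R (contraction R M).
Proof.
move=> hR hRS hM; split.
- by move=> x [].
- by split; [apply: prime0 hM | apply: subring0].
- by move=> x y [Mx Rx] [My Ry]; split; [exact: primeD hM Mx My | exact: subringD].
- by move=> r x Rr [Mx Rx]; split; [apply: primeMl hM _ Mx; apply: hRS | apply: subringM].
split; first by case=> /(prime_not1 hM).
move=> x y Rx Ry [Mxy _].
by case: (prime_mulP hM (hRS _ Rx) (hRS _ Ry) Mxy) => h; [left|right].
Qed.

Lemma prime_compl_mult_set R P : is_subring R -> is_prime R P ->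
  is_mult_set R (fun w => R w /\ ~ P w).
Proof.
move=> hR hP; split.
- by move=> w [].
- by split; [apply: subring1 | apply: prime_not1 hP].
- move=> x y [Rx nPx] [Ry nPy]; split; first exact: subringM.
  by case/(prime_mulP hP Rx Ry).
- by case=> _; apply; apply: prime0 hP.
Qed.

Lemma mult_set_neq0 R W w : is_mult_set R W -> W w -> w != 0.
Proof. by case=> _ _ _ W0 Ww; apply/eqP => w0; apply: W0; rewrite -w0. Qed.

Lemma localization_mem R W x : is_mult_set R W -> R x -> localization R W x.
Proof. by case=> _ W1 _ _ Rx; exists x, 1; rewrite divr1. Qed.

Lemma localization_subring R W : is_subring R -> is_mult_set R W ->
  is_subring (localization R W).
Proof.
move=> hR hW; have [WR _ WM _] := hW.
split; first exact: localization_mem (subring1 hR).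
- move=> _ _ [a [u [Ra Wu ->]]] [b [w [Rb Ww ->]]].
  have [u0 w0] := (mult_set_neq0 hW Wu, mult_set_neq0 hW Ww).
  exists (a * w - b * u), (u * w); split; last by field; rewrite u0 w0.
  + exact: subringB hR (subringM hR Ra (WR _ Ww)) (subringM hR Rb (WR _ Wu)).
  + exact: WM.
- move=> _ _ [a [u [Ra Wu ->]]] [b [w [Rb Ww ->]]].
  have [u0 w0] := (mult_set_neq0 hW Wu, mult_set_neq0 hW Ww).
  exists (a * b), (u * w); split; last by field; rewrite u0 w0.
  + exact: subringM.
  + exact: WM.
Qed.

Section LocalizationAtPrime.
Variables (R P : K -> Prop).
Hypotheses (hR : is_subring R) (hP : is_prime R P).

Lemma loc_at_mem x : R x -> loc_at R P x.
Proof. exact/localization_mem/prime_compl_mult_set. Qed.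

Lemma loc_atV u : R u -> ~ P u -> loc_at R P u^-1.
Proof. by move=> Ru nPu; exists 1, u; split; [apply: subring1 | | rewrite div1r]. Qed.

Lemma loc_at_subring : is_subring (loc_at R P).
Proof. exact/localization_subring/prime_compl_mult_set. Qed.

Lemma loc_atM x y : loc_at R P x -> loc_at R P y -> loc_at R P (x * y).
Proof. exact: subringM loc_at_subring. Qed.

Lemma loc_at_div_notin a c : R c -> ~ P c -> P a -> a != 0 -> ~ loc_at R P (c / a).
Proof.
move=> Rc nPc Pa a0 [r [u [Rr [Ru nPu] e]]].
have u0 := prime_neq0 hP nPu.
have ecu : c * u = r * a by rewrite -[c](mulfVK a0) e; field.
have : P (c * u) by rewrite ecu; apply: primeMl hP Rr Pa.
by case/(prime_mulP hP Rc Ru).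
Qed.

End LocalizationAtPrime.

Section Valuation.
Variable v : K -> int.
Hypothesis hv : discrete_valuation v.

Lemma valM x y : x != 0 -> y != 0 -> v (x * y) = v x + v y.
Proof. by case: hv => h _ _; apply: h. Qed.

Lemma val1 : v 1 = 0.
Proof.
have := valM (oner_neq0 K) (oner_neq0 K); rewrite mulr1 => e.
by apply: (addrI (v 1)); rewrite addr0 -e.
Qed.

Lemma valV x : x != 0 -> v x^-1 = - v x.
Proof.
move=> x0; have := valM x0 (invr_neq0 x0); rewrite divff // val1 => e.
by apply/eqP; rewrite -addr_eq0 addrC -e.
Qed.

Lemma valX x n : x != 0 -> v (x ^+ n) = v x *+ n.
Proof.
move=> x0; elim: n => [|n IH]; first by rewrite expr0 val1.
by rewrite exprS valM ?expf_neq0 // IH mulrS.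
Qed.

Lemma valXz x (k : int) : x != 0 -> v (x ^ k) = k * v x.
Proof.
move=> x0; case: k => n; first by rewrite /= valX //; lia.
by rewrite NegzE -exprnN valV ?expf_neq0 // valX //; lia.
Qed.

Lemma valuation_ringE x : x != 0 -> valuation_ring v x <-> 0 <= v x.
Proof. by move=> x0; split; [case=> // x0'; move: x0; rewrite x0' eqxx | right]. Qed.

Lemma val_surj (n : int) : exists x, x != 0 /\ v x = n.
Proof. by case: hv => _ _ h; apply: h. Qed.

End Valuation.

Section ValuationUnique.
Variables v w : K -> int.
Hypotheses (hv : discrete_valuation v) (hw : discrete_valuation w)
  (hvw : forall x, valuation_ring v x <-> valuation_ring w x).

Lemma val_ge0_eq x : x != 0 -> (0 <= v x) = (0 <= w x).
Proof.
move=> x0; apply/idP/idP.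
- by move/(valuation_ringE v x0)/hvw/(valuation_ringE w x0).
- by move/(valuation_ringE w x0)/hvw/(valuation_ringE v x0).
Qed.

Lemma val_eq0_eq y : y != 0 -> v y = 0 -> w y = 0.
Proof.
move=> y0 vy0; have := val_ge0_eq y0; have := val_ge0_eq (invr_neq0 y0).
by rewrite !valV // !oppr_ge0 vy0 lexx => wy_le0 wy_ge0; apply/eqP; rewrite eq_le -wy_le0 -wy_ge0.
Qed.

(* Every [y] is a unit times a power of a uniformizer [p] of [v]. *)
Lemma val_uniformizer p : p != 0 -> v p = 1 -> forall y, y != 0 -> w y = v y * w p.
Proof.
move=> p0 vp1 y y0.
have pk0 : p ^ v y != 0 by rewrite expfz_neq0.
have u0 : y / p ^ v y != 0 by rewrite mulf_neq0 ?invr_neq0.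
have := val_eq0_eq u0.
rewrite !valM ?invr_neq0 // !valV // !valXz // vp1 mulr1 subrr => /(_ erefl).
by move/eqP; rewrite subr_eq0 => /eqP.
Qed.

Lemma val_unique x : x != 0 -> v x = w x.
Proof.
move=> x0; have [p [p0 vp1]] := val_surj hv 1; have [q [q0 wq1]] := val_surj hw 1.
have wp_ge0 : 0 <= w p by rewrite -val_ge0_eq // vp1.
have wp1 : w p = 1.
  move: wp_ge0 (val_uniformizer p0 vp1 q0); rewrite wq1; move: (v q) (w p) => m n n_ge0 /esym e.
  by case: (lerP m 0) => ?; nia.
by rewrite (val_uniformizer p0 vp1 x0) wp1 mulr1.
Qed.

End ValuationUnique.

Definition is_ideal S I :=
  [/\ subset_pred I S, I 0, (forall x y, I x -> I y -> I (x + y)) &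
      (forall r x, S r -> I x -> I (r * x))].

Definition is_unit_in S t := exists z, S z /\ t * z = 1.

Definition add_principal_ideal S I x : K -> Prop :=
  fun z => exists a s, [/\ I a, S s & z = a + x * s].

Definition proper_ideal_containing S t I := [/\ is_ideal S I, I t & ~ I 1].

Lemma zero_pred_ideal S : is_subring S -> is_ideal S (@zero_pred K).
Proof.
move=> hS; split => //; first by move=> x ->; apply: subring0.
- by move=> x y -> ->; rewrite addr0.
- by move=> r x _ ->; rewrite mulr0.
Qed.

Section AddPrincipalIdeal.
Variables (S I : K -> Prop) (x : K).
Hypotheses (hS : is_subring S) (hI : is_ideal S I) (Sx : S x).

Lemma add_principal_idealP : is_ideal S (add_principal_ideal S I x).
Proof.
have [IS I0 ID IM] := hI; split.
- by move=> _ [a [s [Ia Ss ->]]]; apply: subringD (IS _ Ia) (subringM hS Sx Ss).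
- by exists 0, 0; split => //; [apply: subring0 | rewrite mulr0 addr0].
- move=> _ _ [a [s [Ia Ss ->]]] [a' [s' [Ia' Ss' ->]]].
  by exists (a + a'), (s + s'); split; [apply: ID | apply: subringD | rewrite mulrDr addrACA].
- move=> r _ Sr [a [s [Ia Ss ->]]].
  by exists (r * a), (r * s); split; [apply: IM | apply: subringM | rewrite mulrDr mulrCA].
Qed.

Lemma add_principal_ideal_subl : subset_pred I (add_principal_ideal S I x).
Proof. by move=> a Ia; exists a, 0; split => //; [apply: subring0 | rewrite mulr0 addr0]. Qed.

Lemma add_principal_ideal_memr : add_principal_ideal S I x x.
Proof.
by case: hI => _ I0 _ _; exists 0, 1; split => //; [apply: subring1 | rewrite add0r mulr1].
Qed.

End AddPrincipalIdeal.

Lemma comaximal_ideal_prime S A : is_subring S -> is_ideal S A -> ~ A 1 ->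
  (forall x, S x -> ~ A x -> add_principal_ideal S A x 1) -> is_prime S A.
Proof.
move=> hS hA nA1 comax; have [AS A0 AD AM] := hA.
split => //; split => // x y Sx Sy Axy.
apply: contrapT => /not_orP[nAx nAy]; apply: nA1.
have [a [s [Aa Ss e1]]] := comax x Sx nAx.
have [b [r [Ab Sr e2]]] := comax y Sy nAy.
have -> : 1 = a * b + (a * (y * r) + (s * (x * b)) + (s * r) * (x * y)).
  by rewrite -[1]mulr1 {1}e1 e2; ring.
have SM := subringM hS.
apply: (AD); first exact: AM (AS _ Aa) Ab.
apply: (AD); first apply: (AD).
- by rewrite mulrC; apply: (AM) Aa; apply: SM.
- by rewrite mulrA; apply: (AM) Ab; apply: SM.
- by apply: (AM) Axy; apply: SM.
Qed.

Section KrullPrimeExistence.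
Local Open Scope classical_set_scope.
Variables (S : K -> Prop) (t : K).
Hypotheses (hS : is_subring S) (St : S t) (t_nonunit : ~ is_unit_in S t).

(* Zorn's lemma needs a predicate holding for the empty union, hence the guard. *)
Definition nonempty_proper_ideal (X : set K) :=
  (exists x, X x) -> proper_ideal_containing S t X.

Lemma nonempty_proper_ideal_bigcup (F : set (set K)) :
  F `<=` nonempty_proper_ideal -> total_on F subset ->
  nonempty_proper_ideal (\bigcup_(X in F) X).
Proof.
move=> Fprop Ftot [x0 [X0 FX0 X0x0]].
have member X x : F X -> X x -> proper_ideal_containing S t X.
  by move=> FX Xx; apply: Fprop FX _; exists x.
have [[_ X00 _ _] X0t _] := member _ _ FX0 X0x0.
have bigcup_ideal : is_ideal S (\bigcup_(X in F) X).
  split.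
  - by move=> x [X FX Xx]; have [[XS _ _ _] _ _] := member _ _ FX Xx; apply: XS.
  - by exists X0.
  - move=> x y [X FX Xx] [Y FY Yy].
    have [[_ _ XD _] _ _] := member _ _ FX Xx; have [[_ _ YD _] _ _] := member _ _ FY Yy.
    have [XY | YX] := Ftot _ _ FX FY.
    + by exists Y => //; apply: YD (XY _ Xx) Yy.
    + by exists X => //; apply: XD Xx (YX _ Yy).
  - move=> r x Sr [X FX Xx]; exists X => //.
    by have [[_ _ _ XM] _ _] := member _ _ FX Xx; apply: XM.
split => //; first by exists X0.
by case=> X FX X1; have [_ _] := member _ _ FX X1; apply.
Qed.

Lemma exists_prime_containing : exists M, is_prime S M /\ M t.
Proof.
have [A [A_prop A_max]] := Zorn_bigcup nonempty_proper_ideal_bigcup.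
pose tS := add_principal_ideal S (@zero_pred K) t.
have tS_ideal : is_ideal S tS by apply: add_principal_idealP (zero_pred_ideal hS) St.
have tSt : tS t by apply: add_principal_ideal_memr (zero_pred_ideal hS).
have tS_prop : nonempty_proper_ideal tS.
  by move=> _; split => // -[a [s [-> Ss e]]]; apply: t_nonunit; exists s; rewrite e add0r.
have [A_ideal At nA1] : proper_ideal_containing S t A.
  apply: A_prop; apply: contrapT => A_empty; apply: (A_max tS) => //.
  split; first by move=> x Ax; case: A_empty; exists x.
  by move=> tSA; apply: A_empty; exists t; apply: tSA.
exists A; split => //; apply: comaximal_ideal_prime => // x Sx nAx.
pose B := add_principal_ideal S A x.
have B_ideal : is_ideal S B by apply: add_principal_idealP.
apply: contrapT => nB1; apply: (A_max B); last first.
  by move=> _; split => //; apply: add_principal_ideal_subl.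
split; first exact: add_principal_ideal_subl.
by move=> BA; apply: nAx; apply: BA; apply: add_principal_ideal_memr.
Qed.

End KrullPrimeExistence.

Definition has_divisor R x (D : (K -> Prop) -> int) :=
  forall P, height_one R P -> forall v, discrete_valuation v ->
    eq_pred (loc_at R P) (valuation_ring v) -> v x = D P.

Definition prime_divisor Q : (K -> Prop) -> int :=
  fun P => if `[< P = Q >] then 1 else 0.

Definition torsion_divisor R (D : (K -> Prop) -> int) :=
  exists n : nat, (0 < n)%N /\ is_principal_divisor R (fun P => D P *+ n).

Lemma prime_divisor_id P : prime_divisor P P = 1.
Proof. by rewrite /prime_divisor; case: asboolP. Qed.

Lemma prime_divisor_neq Q P : P <> Q -> prime_divisor Q P = 0.
Proof. by rewrite /prime_divisor; case: asboolP. Qed.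

Lemma dim_one_going_down R S : is_subring R -> is_subring S -> krull_dim_one R ->
  going_down R S.
Proof.
move=> hR hS [_ no_chain] p q Q hp hq pq hQ Qq.
have [p_eq_q | p_neq_q] := pselect (eq_pred p q).
  by exists Q; split => // x; rewrite Qq p_eq_q.
have [[x [px x_neq0]] | p_zero] := pselect (exists x, p x /\ x <> 0).
  case: no_chain; exists (@zero_pred K), p, q; split => //.
  - exact: zero_pred_prime.
  - by split; [move=> _ ->; apply: prime0 hp | exists x].
  split => //; apply: contrapT => q_sub_p; apply: p_neq_q => y; split; first exact: pq.
  by move=> qy; apply: contrapT => npy; apply: q_sub_p; exists y.
exists (@zero_pred K); split; [exact: zero_pred_prime | by move=> _ ->; apply: prime0 hQ |].
move=> y; split; first by move=> [-> _]; apply: prime0 hp.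
move=> py; split; last exact: prime_mem hp py.
by apply: contrapT => y_neq0; apply: p_zero; exists y.
Qed.

Section Divisors.
Variable R : K -> Prop.
Implicit Types D E : (K -> Prop) -> int.

Lemma has_divisor_ext x D E : (forall P, height_one R P -> D P = E P) ->
  has_divisor R x D -> has_divisor R x E.
Proof. by move=> DE hx P hP v hv hPv; rewrite -DE // (hx P hP v hv hPv). Qed.

Lemma has_divisor1 : has_divisor R 1 (fun=> 0).
Proof. by move=> P _ v hv _; apply: val1. Qed.

Lemma has_divisorM x y D E : x != 0 -> y != 0 ->
  has_divisor R x D -> has_divisor R y E -> has_divisor R (x * y) (fun P => D P + E P).
Proof.
move=> x0 y0 hx hy P hP v hv hPv.
by rewrite (valM hv) // (hx P hP v hv hPv) (hy P hP v hv hPv).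
Qed.

Lemma has_divisorXz x D (k : int) : x != 0 ->
  has_divisor R x D -> has_divisor R (x ^ k) (fun P => k * D P).
Proof. by move=> x0 hx P hP v hv hPv; rewrite (valXz hv) // (hx P hP v hv hPv). Qed.

Lemma torsion_divisor_ext D E : (forall P, height_one R P -> D P = E P) ->
  torsion_divisor R D -> torsion_divisor R E.
Proof.
move=> DE [n [n_gt0 [x [x0 hx]]]]; exists n; split => //; exists x; split => //.
by apply: has_divisor_ext hx => P hP; rewrite DE.
Qed.

Lemma torsion_divisor0 : torsion_divisor R (fun=> 0).
Proof.
exists 1%N; split => //; exists 1; split; first exact: oner_neq0.
exact: has_divisor1.
Qed.

Lemma torsion_divisorD D E : torsion_divisor R D -> torsion_divisor R E ->
  torsion_divisor R (fun P => D P + E P).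
Proof.
move=> [m [m_gt0 [x [x0 hx]]]] [n [n_gt0 [y [y0 hy]]]].
exists (m * n)%N; split; first by rewrite muln_gt0 m_gt0.
exists (x ^ n%:Z * y ^ m%:Z); split; first by rewrite mulf_neq0 ?expfz_neq0.
apply: has_divisor_ext (has_divisorM (expfz_neq0 _ x0) (expfz_neq0 _ y0)
  (has_divisorXz _ x0 hx) (has_divisorXz _ y0 hy)) => P _.
by ring.
Qed.

Lemma torsion_divisorZ D (k : int) : torsion_divisor R D ->
  torsion_divisor R (fun P => k * D P).
Proof.
move=> [n [n_gt0 [x [x0 hx]]]]; exists n; split => //.
exists (x ^ k); split; first by rewrite expfz_neq0.
by apply: has_divisor_ext (has_divisorXz _ x0 hx) => P _; rewrite mulrnAr.
Qed.

Lemma torsion_divisor_finite_support :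
  (forall P, height_one R P -> torsion_divisor R (prime_divisor P)) ->
  forall D (s : list (K -> Prop)), (forall P, D P != 0 -> List.In P s) ->
  torsion_divisor R D.
Proof.
move=> prime_tors D s; elim: s D => [|P0 s IH] D supp.
  apply: torsion_divisor_ext torsion_divisor0 => P _.
  by apply/esym/eqP; apply: contraT => /supp.
pose D' P := if `[< P = P0 >] then 0 else D P.
have D'_tors : torsion_divisor R D'.
  apply: IH => P; rewrite /D'; case: asboolP => // nPP0 /supp [] // PP0.
  by case: nPP0.
have P0_tors : torsion_divisor R (fun P => D P0 * prime_divisor P0 P).
  apply: torsion_divisorZ; have [hP0 | nhP0] := pselect (height_one R P0).
    exact: prime_tors.
  apply: torsion_divisor_ext torsion_divisor0 => P hP; rewrite /prime_divisor.
  by case: asboolP => // PP0; case: nhP0; rewrite -PP0.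
apply: torsion_divisor_ext (torsion_divisorD D'_tors P0_tors) => P _.
rewrite /D' /prime_divisor; case: asboolP => [PP0 | _]; last by rewrite mulr0 addr0.
by rewrite mulr1 add0r PP0.
Qed.

End Divisors.

Definition unit_contraction R S : K -> Prop := fun w => R w /\ is_unit_in S w.

Lemma unit_contraction_mult_set R S : is_subring R -> is_subring S ->
  is_mult_set R (unit_contraction R S).
Proof.
move=> hR hS; split.
- by move=> w [].
- by split; [apply: subring1 | exists 1; split; [apply: subring1 | rewrite mulr1]].
- move=> x y [Rx [x' [Sx' xx']]] [Ry [y' [Sy' yy']]]; split; first exact: subringM.
  by exists (x' * y'); split; [apply: subringM | rewrite mulrACA xx' yy' mulr1].
- by case=> _ [z [_ /eqP]]; rewrite mul0r eq_sym oner_eq0.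
Qed.

Lemma localization_unit_contraction_sub R S : is_subring R -> is_subring S ->
  subset_pred R S -> subset_pred (localization R (unit_contraction R S)) S.
Proof.
move=> hR hS RS _ [a [w [Ra Ww ->]]]; have [_ [z [Sz wz]]] := Ww.
have w0 := mult_set_neq0 (unit_contraction_mult_set hR hS) Ww.
have -> : a / w = a * z by rewrite -[z](mulKf w0) wz mulr1.
exact: subringM hS (RS _ Ra) Sz.
Qed.

Section Krull.
Variable R : K -> Prop.
Hypotheses (hR : is_subring R) (hK : krull_domain R).

Lemma height_one_prime P : height_one R P -> is_prime R P.
Proof. by case. Qed.

Lemma krull_dvr P : height_one R P ->
  exists v, discrete_valuation v /\ eq_pred (loc_at R P) (valuation_ring v).
Proof. by case: hK => _ _ h /h. Qed.

Lemma mem_krull x : (forall P, height_one R P -> loc_at R P x) -> R x.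
Proof. by case: hK => h _ _ /h. Qed.

Lemma krull_finite_primes x : R x -> x != 0 ->
  exists s : list (K -> Prop), forall P, height_one R P -> P x -> List.In P s.
Proof. by case: hK => _ h _; apply: h. Qed.

Section HeightOnePrime.
Variables (P : K -> Prop) (v : K -> int).
Hypotheses (hP : height_one R P) (hv : discrete_valuation v)
  (hPv : eq_pred (loc_at R P) (valuation_ring v)).

Lemma loc_atE x : x != 0 -> loc_at R P x <-> 0 <= v x.
Proof. by move=> x0; rewrite -(valuation_ringE v x0); apply: hPv. Qed.

Lemma val_ge0 x : R x -> x != 0 -> 0 <= v x.
Proof. by move=> Rx x0; apply/(loc_atE x0)/loc_at_mem => //; apply: height_one_prime. Qed.

Lemma val_gt0 y : P y -> y != 0 -> 0 < v y.
Proof.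
move=> Py y0; have hP' := height_one_prime hP; have Ry := prime_mem hP' Py.
rewrite lt_def (val_ge0 Ry y0) andbT; apply/eqP => vy0.
have : loc_at R P y^-1 by apply/(loc_atE (invr_neq0 y0)); rewrite (valV hv) // vy0 oppr0.
by rewrite -div1r; apply: (loc_at_div_notin hP' (subring1 hR) (prime_not1 hP') Py y0).
Qed.

Lemma loc_at_dichotomy x : x != 0 -> loc_at R P x \/ loc_at R P x^-1.
Proof.
move=> x0; case: (lerP 0 (v x)) => vx; first by left; apply/(loc_atE x0).
by right; apply/(loc_atE (invr_neq0 x0)); rewrite (valV hv) // oppr_ge0 ltW.
Qed.

Lemma loc_at_mulX y z : y != 0 -> 0 < v y -> exists k : nat, loc_at R P (z * y ^+ k).
Proof.
move=> y0 vy_gt0; have hP' := height_one_prime hP.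
have [-> | z0] := eqVneq z 0.
  by exists 0%N; rewrite mul0r; exact: (loc_at_mem hR hP' (subring0 hR)).
exists `|v z|%N; apply/(loc_atE _); first by rewrite mulf_neq0 ?expf_neq0.
rewrite (valM hv) ?expf_neq0 // (valX hv) //.
move: vy_gt0; move: (v z) (v y) => m n n_gt0; nia.
Qed.

End HeightOnePrime.

Lemma height_one_incomparable P Q : height_one R P -> height_one R Q -> Q <> P ->
  exists b, Q b /\ ~ P b.
Proof.
move=> [hP _ hPmin] [hQ Q_neq0 _] QP; apply: contra_notP QP => QsubP.
have QsubP' : subset_pred Q P by move=> x Qx; apply: contrapT => nPx; apply: QsubP; exists x.
apply: funext => x; apply: propext; split; first exact: QsubP'.
move=> Px; apply: contrapT => nQx; apply: hPmin; exists Q; split => //.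
by split => //; exists x.
Qed.

Lemma has_divisor_mem x D : x != 0 -> has_divisor R x D ->
  (forall P, height_one R P -> 0 <= D P) -> R x.
Proof.
move=> x0 hx D_ge0; apply: mem_krull => P hP.
have [v [hv hPv]] := krull_dvr hP.
by apply/(loc_atE hPv x0); rewrite (hx P hP v hv hPv) D_ge0.
Qed.

Lemma common_multiplier (C : (K -> Prop) -> Prop) M z (s : list (K -> Prop)) :
  (forall Q, C Q -> is_prime R Q) -> is_mult_set R M ->
  (forall Q, C Q -> exists m, M m /\ loc_at R Q (z * m)) ->
  exists m, M m /\ forall Q, List.In Q s -> C Q -> loc_at R Q (z * m).
Proof.
move=> C_prime hM local; have [MR M1 MM _] := hM.
elim: s => [|Q s [m [Mm IH]]]; first by exists 1.
have [CQ | nCQ] := pselect (C Q); last first.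
  by exists m; split => // Q' [<- // | /IH].
have [mQ [MmQ zmQ]] := local Q CQ.
exists (m * mQ); split; first exact: MM.
move=> Q' [<- | Q's] CQ'; have hQ' := C_prime _ CQ'.
- by rewrite mulrCA; apply: (loc_atM hR hQ' _ zmQ); exact: (loc_at_mem hR hQ' (MR _ Mm)).
- by rewrite mulrA; exact: (loc_atM hR hQ' (IH _ Q's CQ') (loc_at_mem hR hQ' (MR _ MmQ))).
Qed.

(* Only the finitely many height-one primes containing the denominator matter. *)
Lemma krull_common_multiplier (C : (K -> Prop) -> Prop) M a b :
  (forall Q, C Q -> height_one R Q) -> is_mult_set R M -> R a -> R b -> b != 0 ->
  (forall Q, C Q -> exists m, M m /\ loc_at R Q (a / b * m)) ->
  exists m, M m /\ forall Q, C Q -> loc_at R Q (a / b * m).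
Proof.
move=> C_h1 hM Ra Rb b0 local.
have C_prime Q : C Q -> is_prime R Q by move/C_h1/height_one_prime.
have [s s_primes] := krull_finite_primes Rb b0.
have [m [Mm mloc]] := common_multiplier s C_prime hM local.
exists m; split => // Q CQ; have hQ := C_prime _ CQ.
have [Qb | nQb] := pselect (Q b); first by apply: mloc => //; apply: s_primes => //; apply: C_h1.
have [MR _ _ _] := hM.
apply: (loc_atM hR hQ _ (loc_at_mem hR hQ (MR _ Mm))).
exact: (loc_atM hR hQ (loc_at_mem hR hQ Ra) (loc_atV hR Rb nQb)).
Qed.

Lemma lying_over_sub_loc_at S Q M : height_one R Q -> is_prime S M ->
  eq_pred (contraction R M) Q -> subset_pred S (loc_at R Q).
Proof.
move=> hQ hM MQ s Ss; have hQ' := height_one_prime hQ.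
have [-> | s0] := eqVneq s 0; first exact: (loc_at_mem hR hQ' (subring0 hR)).
have [v [hv hQv]] := krull_dvr hQ.
case: (loc_at_dichotomy hv hQv s0) => // -[a [u [Ra [Ru nQu] e]]].
have a0 : a != 0 by apply: contra_eq_neq e => ->; rewrite mul0r invr_neq0.
have eu : u = s * a by rewrite -[s]invrK e invf_div divfK.
have nQa : ~ Q a.
  move=> /MQ [Ma _]; apply: nQu; apply/MQ; split => //.
  by rewrite eu; apply: primeMl hM Ss Ma.
by rewrite -[s](mulfK a0) -eu; exact: (loc_atM hR hQ' (loc_at_mem hR hQ' Ru) (loc_atV hR Ra nQa)).
Qed.

End Krull.

Section TorsionClassGroup.
Variable R : K -> Prop.
Hypotheses (hR : is_subring R) (hK : krull_domain R) (hct : class_group_torsion R).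

Lemma prime_divisor_multiple Q : height_one R Q ->
  exists t (n : nat), [/\ t != 0, (0 < n)%N & has_divisor R t (fun P => prime_divisor Q P *+ n)].
Proof.
move=> hQ; have hD : is_divisor R (prime_divisor Q).
  split; first by move=> P nhP; apply: prime_divisor_neq => PQ; apply: nhP; rewrite PQ.
  exists [:: Q] => P; have [-> | nPQ] := pselect (P = Q); first by left.
  by rewrite prime_divisor_neq ?eqxx.
by have [n [n_gt0 [t [t0 ht]]]] := hct hD; exists t, n.
Qed.

Section PrimeDivisorMultiple.
Variables (Q : K -> Prop) (t : K) (n : nat).
Hypotheses (hQ : height_one R Q) (t0 : t != 0) (n_gt0 : (0 < n)%N)
  (ht : has_divisor R t (fun P => prime_divisor Q P *+ n)).

Lemma prime_divisor_multiple_mem : R t.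
Proof.
apply: (has_divisor_mem hK t0 ht) => P _.
by rewrite mulrn_wge0 // /prime_divisor; case: asboolP.
Qed.

Lemma prime_divisor_multiple_div y : Q y -> R (y ^+ n / t).
Proof.
move=> Qy; have Ry := prime_mem (height_one_prime hQ) Qy.
have [-> | y0] := eqVneq y 0; first by rewrite expr0n gtn_eqF // mul0r; apply: subring0.
have yt0 : y ^+ n / t != 0 by rewrite mulf_neq0 ?invr_neq0 ?expf_neq0.
apply: (mem_krull hK) => P hP; have [v [hv hPv]] := krull_dvr hK hP.
apply/(loc_atE hPv yt0); rewrite (valM hv) ?invr_neq0 ?expf_neq0 // (valV hv) // (valX hv) //.
rewrite (ht hP hv hPv); have [PQ | nPQ] := pselect (P = Q).
- move: (val_gt0 hR hP hv hPv) => vy_gt0; rewrite PQ prime_divisor_id in vy_gt0 *.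
  by move: (vy_gt0 _ Qy y0); move: (v y) => m m_gt0; rewrite -mulr_natr; nia.
- by rewrite prime_divisor_neq // mul0rn subr0 mulrn_wge0 // (val_ge0 hR hP hPv Ry y0).
Qed.

(* Going-down lets [Q] lift to a prime of [S] lying over it, which confines [S] to [R_Q]. *)
Lemma nonunit_sub_loc_at S : is_subring S -> subset_pred R S -> going_down R S ->
  ~ is_unit_in S t -> subset_pred S (loc_at R Q).
Proof.
move=> hS RS hGD t_nonunit; have Rt := prime_divisor_multiple_mem.
have [M [hM Mt]] := exists_prime_containing hS (RS _ Rt) t_nonunit.
have Q_sub_M : subset_pred Q (contraction R M).
  move=> y Qy; have Ry := prime_mem (height_one_prime hQ) Qy; split => //.
  apply: (prime_expP (n := n) hS hM (RS _ Ry)).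
  rewrite -(divfK t0 (y ^+ n)); apply: primeMl hM _ Mt.
  exact/RS/prime_divisor_multiple_div.
have [P' [hP' _ P'Q]] := hGD _ _ _ (height_one_prime hQ)
  (contraction_prime hR RS hM) Q_sub_M hM (fun=> conj id id).
exact: (lying_over_sub_loc_at hR hK hQ hP' P'Q).
Qed.

End PrimeDivisorMultiple.

Lemma going_down_local_multiplier S Q x : is_subring S -> subset_pred R S ->
  going_down R S -> height_one R Q -> S x ->
  exists m, unit_contraction R S m /\ loc_at R Q (x * m).
Proof.
move=> hS RS hGD hQ Sx.
have [t [n [t0 n_gt0 ht]]] := prime_divisor_multiple hQ.
have Rt := prime_divisor_multiple_mem t0 ht.
have hW := unit_contraction_mult_set hR hS.
have [t_unit | t_nonunit] := pselect (is_unit_in S t).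
  have [v [hv hQv]] := krull_dvr hK hQ.
  have vt_gt0 : 0 < v t by rewrite (ht Q hQ v hv hQv) prime_divisor_id pmulrn_lgt0.
  have [k xtk] := loc_at_mulX hR hQ hv hQv x t0 vt_gt0.
  exists (t ^+ k); split => //; elim: k {xtk} => [|k IH]; first by rewrite expr0; case: hW.
  by rewrite exprS; case: hW => _ _ WM _; apply: WM.
exists 1; split; first by case: hW.
by rewrite mulr1; exact: (nonunit_sub_loc_at hQ t0 n_gt0 ht hS RS hGD t_nonunit Sx).
Qed.

End TorsionClassGroup.

Lemma torsion_globally_perinormal R : is_subring R -> is_fraction_field_of R ->
  krull_domain R -> class_group_torsion R -> globally_perinormal R.
Proof.
move=> hR hF hK hct S hS RS hGD; have hW := unit_contraction_mult_set hR hS.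
exists (unit_contraction R S); split => // x; split; last exact: localization_unit_contraction_sub.
have [a [b [Ra Rb b0 ->]]] := hF x => Sx.
have [m [Wm loc_m]] := krull_common_multiplier hR hK (fun _ => id) hW Ra Rb b0
  (fun Q hQ => going_down_local_multiplier hR hK hct hS RS hGD hQ Sx).
exists (a / b * m), m; split => //; first exact: (mem_krull hK loc_m).
by rewrite mulfK // (mult_set_neq0 hW Wm).
Qed.

Section DimensionOne.
Variable R : K -> Prop.
Hypotheses (hR : is_subring R) (hK : krull_domain R).

Lemma approximation P : height_one R P ->
  exists x, (forall Q, height_one R Q -> Q <> P -> loc_at R Q x) /\ ~ loc_at R P x.
Proof.
move=> hP; have hP' := height_one_prime hP.
have [_ [_ [a [Pa /eqP a0]]] _] := hP; have Ra := prime_mem hP' Pa.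
have local Q : height_one R Q /\ Q <> P -> exists m, (R m /\ ~ P m) /\ loc_at R Q (1 / a * m).
  move=> [hQ QP]; have [b [Qb nPb]] := height_one_incomparable hP hQ QP.
  have Rb := prime_mem (height_one_prime hQ) Qb.
  have b0 := prime_neq0 hP' nPb; have [v [hv hQv]] := krull_dvr hK hQ.
  have [k abk] := loc_at_mulX hR hQ hv hQv (1 / a) b0 (val_gt0 hR hQ hv hQv Qb b0).
  exists (b ^+ k); split => //; split; first exact: subringX.
  by move/(prime_expP hR hP' Rb).
have [m [[Rm nPm] loc_m]] :=
  krull_common_multiplier (C := fun Q => height_one R Q /\ Q <> P) hR hK (fun _ hQ => proj1 hQ)
  (prime_compl_mult_set hR hP') (subring1 hR) Ra a0 local.
exists (1 / a * m); split => [Q hQ QP | ]; first exact: loc_m.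
by rewrite mul1r mulrC; exact: (loc_at_div_notin hP' Rm nPm Pa a0).
Qed.

Hypotheses (hdim : krull_dim_one R) (hgp : globally_perinormal R).

(* [R_W] is the intersection of the [R_Q], [Q <> P]; since it differs from [R],
   some [w] of [W] lies in [P], and [w] is a unit at every other prime. *)
Lemma prime_divisor_torsion P : height_one R P -> torsion_divisor R (prime_divisor P).
Proof.
move=> hP; have hP' := height_one_prime hP.
pose S x := forall Q, height_one R Q -> Q <> P -> loc_at R Q x.
have hS : is_subring S.
  split; first by move=> Q /height_one_prime hQ _; exact: (loc_at_mem hR hQ (subring1 hR)).
  - move=> x y Sx Sy Q hQ QP; have hLQ := loc_at_subring hR (height_one_prime hQ).
    exact: (subringB hLQ (Sx Q hQ QP) (Sy Q hQ QP)).
  - move=> x y Sx Sy Q hQ QP; have hLQ := loc_at_subring hR (height_one_prime hQ).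
    exact: (subringM hLQ (Sx Q hQ QP) (Sy Q hQ QP)).
have RS : subset_pred R S.
  by move=> x Rx Q /height_one_prime hQ _; exact: (loc_at_mem hR hQ Rx).
have [W [hW SW]] := hgp hS RS (dim_one_going_down hR hS hdim).
have [x [Sx nPx]] := approximation hP.
have [a [w [Ra Ww ex]]] := proj1 (SW x) Sx.
have [WR _ _ _] := hW; have Rw := WR _ Ww; have w0 := mult_set_neq0 hW Ww.
have Pw : P w by apply: contrapT => nPw; apply: nPx; exists a, w.
have Sw' : S w^-1 by apply/SW; exists 1, w; split; [apply: subring1 | | rewrite div1r].
have [v0 [hv0 hPv0]] := krull_dvr hK hP.
exists `|v0 w|%N; split; first by have := val_gt0 hR hP hv0 hPv0 Pw w0; lia.
exists w; split => // Q hQ v hv hQv.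
have [QP | QP] := pselect (Q = P).
  subst Q; rewrite prime_divisor_id -(val_unique hv0 hv _ w0).
    by have := val_gt0 hR hP hv0 hPv0 Pw w0; lia.
  by move=> y; split => [/(hPv0 y)/(hQv y) | /(hQv y)/(hPv0 y)].
rewrite prime_divisor_neq // mul0rn; apply/eqP; rewrite eq_le (val_ge0 hR hQ hQv Rw w0) andbT.
by have /(loc_atE hQv (invr_neq0 w0)) := Sw' Q hQ QP; rewrite (valV hv) // oppr_ge0.
Qed.

End DimensionOne.

End KrullOverrings.

Theorem theorem6p4 (K : fieldType) (R : K -> Prop) :
  is_subring R -> is_fraction_field_of R -> krull_domain R ->
  (class_group_torsion R -> globally_perinormal R) /\
  (krull_dim_one R -> globally_perinormal R -> class_group_torsion R).
Proof.
move=> hR hF hK; split; first exact: torsion_globally_perinormal.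
move=> hdim hgp D [_ [s supp]]; apply: torsion_divisor_finite_support supp => P hP.
exact: prime_divisor_torsion.
Qed.
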